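(* With $O(2)$ acting on $\mathbb R[x,y]$ by $(\varphi\cdot P)=P\circ\varphi^{-1}$ and stabilizers taken in $O(2)$: (1) for $m\ge1$, the stabilizer of $p_m(x,y)$ is $D_m$, and no polynomial in $\mathbb R[x,y]$ of degree $<m$ has stabilizer equal to $D_m$; (2) for $m\ge2$, the stabilizer of $p_m(x,y)+(x^2+y^2)q_m(x,y)$ is $K_m$, and no polynomial in $\mathbb R[x,y]$ of degree $<m+2$ has stabilizer equal to $K_m$; (3) the stabilizer of $x+xy$ is $K_1=\{\mathrm{Id}\}$, and no polynomial of degree $<2$ has stabilizer $K_1$.
   Context: $\mathbb R^2=\mathbb C$, $z=x+iy$; $O(2)$ the Euclidean orthogonal group; $\sigma_m(z)=e^{2\pi i/m}z$, $\tau(z)=\bar z$; $K_m=\langle\sigma_m\rangle$, $D_m=\langle\sigma_m,\tau\rangle$; $p_m=\mathrm{Re}(z^m)$, $q_m=\mathrm{Im}(z^m)$. Degree means total degree. *)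

From Stdlib Require Import Reals.
Open Scope R_scope.

Record mat2 : Type := M2 { m11 : R; m12 : R; m21 : R; m22 : R }.

(* phi(x,y) = (m11 x + m12 y, m21 x + m22 y) *)
Definition mmul (A B : mat2) : mat2 :=
  M2 (m11 A * m11 B + m12 A * m21 B) (m11 A * m12 B + m12 A * m22 B)
     (m21 A * m11 B + m22 A * m21 B) (m21 A * m12 B + m22 A * m22 B).

Definition mid : mat2 := M2 1 0 0 1.

Fixpoint mpow (A : mat2) (n : nat) : mat2 :=
  match n with O => mid | S n => mmul A (mpow A n) end.

Definition mtrans (A : mat2) : mat2 := M2 (m11 A) (m21 A) (m12 A) (m22 A).

Definition inO2 (A : mat2) : Prop := mmul (mtrans A) A = mid.

(* sigma_m(z) = e^{2 pi i/m} z, tau(z) = conj z *)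
Definition sigma (m : nat) : mat2 :=
  M2 (cos (2 * PI / INR m)) (- sin (2 * PI / INR m))
     (sin (2 * PI / INR m)) (cos (2 * PI / INR m)).
Definition tau : mat2 := M2 1 0 0 (-1).

Definition inK (m : nat) (A : mat2) : Prop := exists k : nat, A = mpow (sigma m) k.
Definition inD (m : nat) (A : mat2) : Prop :=
  exists k : nat, A = mpow (sigma m) k \/ A = mmul (mpow (sigma m) k) tau.

(* A polynomial: coefficient c i j of x^i y^j, vanishing when i + j >= bound. *)
Record poly2 : Type := Poly2 {
  coef : nat -> nat -> R;
  pbound : nat;
  coef_pbound : forall i j, (pbound <= i + j)%nat -> coef i j = 0 }.

Definition peval (P : poly2) (x y : R) : R :=
  sum_f_R0 (fun i => sum_f_R0 (fun j => coef P i j * x ^ i * y ^ j) (pbound P)) (pbound P).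

(* total degree < d  (the zero polynomial has degree < d for every d) *)
Definition deg_lt (P : poly2) (d : nat) : Prop :=
  forall i j, (d <= i + j)%nat -> coef P i j = 0.

Definition app (A : mat2) (x y : R) : R * R :=
  (m11 A * x + m12 A * y, m21 A * x + m22 A * y).

(* phi is in the stabilizer of (the polynomial function) f for the action
   (phi . f) = f o phi^{-1}; for phi in O(2), phi^{-1} = phi^T. *)
Definition in_stab (f : R -> R -> R) (A : mat2) : Prop :=
  inO2 A /\ forall x y, f (fst (app (mtrans A) x y)) (snd (app (mtrans A) x y)) = f x y.

(* z^m = (Re, Im) computed by complex multiplication *)
Fixpoint zpow (m : nat) (x y : R) : R * R :=
  match m with
  | O => (1, 0)
  | S m => let (a, b) := zpow m x y in (a * x - b * y, a * y + b * x)
  end.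
Definition pm (m : nat) (x y : R) : R := fst (zpow m x y).
Definition qm (m : nat) (x y : R) : R := snd (zpow m x y).

(* Every element of O(2) is a rotation [rot a] or a reflection [refl a]; in polar
   coordinates (x, y) = (r cos t, r sin t) they act on the angle by t -> t - a and
   t -> a - t, while p_m = r^m cos (m t) and q_m = r^m sin (m t) (de Moivre).  The
   positive halves of (1) and (2) follow: invariance forces cos (m a) = 1, i.e.
   a = 2 pi k / m, and comparing the radii 1 and 2 separates the two homogeneous
   parts of p_m + (x^2+y^2) q_m.

   For the negative halves, a polynomial P invariant under sigma_m equals 1/m times
   its average over the m rotations of K_m.  Writing each monomial of degree d as
   r^d times a trigonometric polynomial with frequencies s <= d, s = d mod 2, the
   average kills all frequencies 0 < s < 2m except m, so for deg P < min(m+2, 2m+1)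
   we get m P = C(r) + r^m (a cos (m t) + b sin (m t)), with a = b = 0 if deg P < m.
   In the first case P is invariant under some reflection, which is not in K_m; in
   the second P is radial, hence invariant under the rotation by pi/m, not in D_m. *)

From Stdlib Require Import Reals Lra Lia ZArith.
Open Scope R_scope.

(* Rotation by [a], and the reflection [rot a * tau] across the line of angle a/2. *)
Definition rot (a : R) : mat2 := M2 (cos a) (- sin a) (sin a) (cos a).
Definition refl (a : R) : mat2 := M2 (cos a) (sin a) (sin a) (- cos a).

Lemma cos_sin_sq t : cos t * cos t + sin t * sin t = 1.
Proof. pose proof (sin2_cos2 t) as H. unfold Rsqr in H. lra. Qed.

Lemma rot_mul a b : mmul (rot a) (rot b) = rot (a + b).
Proof. unfold mmul, rot; cbn. rewrite cos_plus, sin_plus. f_equal; ring. Qed.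

Lemma mpow_rot a k : mpow (rot a) k = rot (INR k * a).
Proof.
  induction k as [|k IH]; cbn [mpow].
  - unfold mid, rot. rewrite Rmult_0_l, cos_0, sin_0, Ropp_0. reflexivity.
  - rewrite IH, rot_mul, S_INR. f_equal. ring.
Qed.

Lemma rot_tau a : mmul (rot a) tau = refl a.
Proof. unfold mmul, rot, tau, refl; cbn. f_equal; ring. Qed.

Lemma inO2_rot a : inO2 (rot a).
Proof. unfold inO2, mmul, mtrans, rot, mid; cbn. pose proof (cos_sin_sq a). f_equal; nra. Qed.

Lemma inO2_refl a : inO2 (refl a).
Proof. unfold inO2, mmul, mtrans, refl, mid; cbn. pose proof (cos_sin_sq a). f_equal; nra. Qed.

(* No rotation is a reflection (their determinants are 1 and -1). *)
Lemma rot_neq_refl a b : rot a <> refl b.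
Proof.
  intros E. pose proof (f_equal m11 E) as E1. pose proof (f_equal m22 E) as E2.
  pose proof (f_equal m12 E) as E3. pose proof (f_equal m21 E) as E4.
  unfold rot, refl in *; cbn in *. pose proof (cos_sin_sq a). nra.
Qed.

Lemma angle_exists c s : c * c + s * s = 1 -> exists th, 0 <= th /\ cos th = c /\ sin th = s.
Proof.
  intros H. pose proof (acos_bound c) as Hb. pose proof PI_RGT_0.
  assert (Hc : -1 <= c <= 1) by nra.
  assert (E : sqrt (1 - c²) = Rabs s).
  { replace (1 - c²) with (Rsqr (Rabs s)) by (rewrite <- Rsqr_abs; unfold Rsqr; lra).
    apply sqrt_Rsqr, Rabs_pos. }
  destruct (Rle_or_lt 0 s) as [Hs|Hs].
  - exists (acos c). split; [lra|]. split; [apply cos_acos; lra|].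
    rewrite sin_acos, E by lra. apply Rabs_pos_eq; lra.
  - exists (2 * PI - acos c). split; [lra|].
    rewrite cos_minus, sin_minus, cos_2PI, sin_2PI, cos_acos, sin_acos, E, Rabs_left by lra.
    split; ring.
Qed.

Lemma polar x y : exists r t, x = r * cos t /\ y = r * sin t.
Proof.
  set (r := sqrt (x * x + y * y)).
  assert (Hr : r * r = x * x + y * y) by (apply sqrt_sqrt; nra).
  destruct (Req_dec r 0) as [E|E].
  - exists 0, 0. rewrite E in Hr. split; nra.
  - destruct (angle_exists (x / r) (y / r)) as [t [_ [Hc Hs]]].
    + replace (x / r * (x / r) + y / r * (y / r)) with ((x * x + y * y) / (r * r)) by (field; auto).
      rewrite <- Hr. field. auto.
    + exists r, t. rewrite Hc, Hs. split; field; auto.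
Qed.

Lemma O2_class A : inO2 A -> exists th, 0 <= th /\ (A = rot th \/ A = refl th).
Proof.
  destruct A as [a b c d]. unfold inO2, mmul, mtrans, mid; cbn. intros H.
  injection H as H1 H2 H3 H4.
  destruct (angle_exists a c) as [th [Hth [Hc Hs]]]; [lra|].
  exists th. split; auto.
  (* the second column is (- det * c, det * a) with det = +-1 *)
  set (det := a * d - c * b).
  assert (Eb : b = - det * c).
  { assert (- det * c - b = - a * (a * b + c * d) + b * (a * a + c * c - 1)) by (unfold det; ring).
    rewrite H2, H1 in H. lra. }
  assert (Ed : d = det * a).
  { assert (det * a - d = - c * (a * b + c * d) + d * (a * a + c * c - 1)) by (unfold det; ring).
    rewrite H2, H1 in H. lra. }
  assert (Hdet : det * det = 1).
  { assert (det * det = (a*a+c*c)*(b*b+d*d) - (a*b+c*d)*(a*b+c*d)) by (unfold det; ring).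
    rewrite H1, H4, H2 in H. lra. }
  assert (det = 1 \/ det = -1) as [L|L] by nra.
  - left. unfold rot. rewrite Hc, Hs, Eb, Ed, L. f_equal; ring.
  - right. unfold refl. rewrite Hc, Hs, Eb, Ed, L. f_equal; ring.
Qed.

Definition ang (m k : nat) : R := INR k * (2 * PI / INR m).

Lemma ang_mul m k : (1 <= m)%nat -> INR m * ang m k = 2 * INR k * PI.
Proof. intros Hm. assert (0 < INR m) by (apply lt_0_INR; lia). unfold ang. field. lra. Qed.

Lemma sigma_pow m k : mpow (sigma m) k = rot (ang m k).
Proof. exact (mpow_rot (2 * PI / INR m) k). Qed.

Lemma inK_iff m A : inK m A <-> exists k, A = rot (ang m k).
Proof. unfold inK. setoid_rewrite sigma_pow. reflexivity. Qed.

Lemma inD_iff m A : inD m A <-> exists k, A = rot (ang m k) \/ A = refl (ang m k).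
Proof. unfold inD. setoid_rewrite sigma_pow. setoid_rewrite rot_tau. reflexivity. Qed.

Lemma inK_1 A : inK 1 A <-> A = mid.
Proof.
  rewrite inK_iff. split.
  - intros [k ->]. unfold ang. simpl (INR 1).
    replace (INR k * (2 * PI / 1)) with (0 + 2 * INR k * PI) by field.
    unfold rot, mid. rewrite cos_period, sin_period, cos_0, sin_0, Ropp_0. reflexivity.
  - intros ->. exists 0%nat. unfold rot, ang, mid. rewrite Rmult_0_l, cos_0, sin_0, Ropp_0. reflexivity.
Qed.

Lemma cos_eq_1_nat x : 0 <= x -> cos x = 1 -> exists k : nat, x = 2 * INR k * PI.
Proof.
  intros Hx Hc. pose proof PI_RGT_0.
  replace x with (2 * (x / 2)) in Hc by field. rewrite cos_2a_sin in Hc.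
  destruct (sin_eq_0_0 (x / 2)) as [z Hz]; [nra|].
  assert (Hz0 : (0 <= z)%Z) by (apply le_IZR; nra).
  exists (Z.to_nat z). rewrite INR_IZR_INZ, Z2Nat.id by exact Hz0. lra.
Qed.

Lemma angle_of_cos_1 m th : (1 <= m)%nat -> 0 <= th -> cos (INR m * th) = 1 ->
  exists k, th = ang m k.
Proof.
  intros Hm Hth Hc. assert (0 < INR m) by (apply lt_0_INR; lia).
  destruct (cos_eq_1_nat (INR m * th)) as [k Hk]; [nra|auto|].
  exists k. apply (Rmult_eq_reg_l (INR m)); [|lra]. rewrite ang_mul; auto.
Qed.

Lemma app_rot a r t :
  app (mtrans (rot a)) (r * cos t) (r * sin t) = (r * cos (t - a), r * sin (t - a)).
Proof. unfold app, mtrans, rot; cbn. rewrite cos_minus, sin_minus. f_equal; ring. Qed.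

Lemma app_refl a r t :
  app (mtrans (refl a)) (r * cos t) (r * sin t) = (r * cos (a - t), r * sin (a - t)).
Proof. unfold app, mtrans, refl; cbn. rewrite cos_minus, sin_minus. f_equal; ring. Qed.

Lemma stab_rot_iff f a : in_stab f (rot a) <->
  forall r t, f (r * cos (t - a)) (r * sin (t - a)) = f (r * cos t) (r * sin t).
Proof.
  split.
  - intros [_ H] r t. specialize (H (r * cos t) (r * sin t)). rewrite app_rot in H. exact H.
  - intros H. split; [apply inO2_rot|]. intros x y.
    destruct (polar x y) as [r [t [-> ->]]]. rewrite app_rot. apply H.
Qed.

Lemma stab_refl_iff f a : in_stab f (refl a) <->
  forall r t, f (r * cos (a - t)) (r * sin (a - t)) = f (r * cos t) (r * sin t).
Proof.
  split.
  - intros [_ H] r t. specialize (H (r * cos t) (r * sin t)). rewrite app_refl in H. exact H.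
  - intros H. split; [apply inO2_refl|]. intros x y.
    destruct (polar x y) as [r [t [-> ->]]]. rewrite app_refl. apply H.
Qed.

Lemma zpow_polar m r t :
  zpow m (r * cos t) (r * sin t) = (r ^ m * cos (INR m * t), r ^ m * sin (INR m * t)).
Proof.
  induction m as [|m IH]; cbn [zpow].
  - rewrite Rmult_0_l, cos_0, sin_0. f_equal; ring.
  - rewrite IH, S_INR, Rmult_plus_distr_r, Rmult_1_l, cos_plus, sin_plus. f_equal; simpl; ring.
Qed.

Lemma pm_polar m r t : pm m (r * cos t) (r * sin t) = r ^ m * cos (INR m * t).
Proof. unfold pm. rewrite zpow_polar. reflexivity. Qed.

Lemma qm_polar m r t : qm m (r * cos t) (r * sin t) = r ^ m * sin (INR m * t).
Proof. unfold qm. rewrite zpow_polar. reflexivity. Qed.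

Lemma cos_sub_period x k : cos (x - 2 * INR k * PI) = cos x.
Proof. rewrite <- (cos_period _ k). f_equal. ring. Qed.

Lemma sin_sub_period x k : sin (x - 2 * INR k * PI) = sin x.
Proof. rewrite <- (sin_period _ k). f_equal. ring. Qed.

Lemma stab_pm m : (1 <= m)%nat -> forall A, in_stab (pm m) A <-> inD m A.
Proof.
  intros Hm A. rewrite inD_iff. split.
  - intros HS. destruct (O2_class A (proj1 HS)) as [th [Hth [-> | ->]]].
    + rewrite stab_rot_iff in HS. specialize (HS 1 0).
      rewrite !pm_polar, Rminus_0_l, Ropp_mult_distr_r_reverse, Rmult_0_r, cos_neg, cos_0, pow1 in HS.
      destruct (angle_of_cos_1 m th Hm Hth) as [k ->]; [lra|]. eauto.
    + rewrite stab_refl_iff in HS. specialize (HS 1 0).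
      rewrite !pm_polar, Rminus_0_r, Rmult_0_r, cos_0, pow1 in HS.
      destruct (angle_of_cos_1 m th Hm Hth) as [k ->]; [lra|]. eauto.
  - intros [k [-> | ->]].
    + apply stab_rot_iff. intros r t.
      rewrite !pm_polar, Rmult_minus_distr_l, ang_mul, cos_sub_period by exact Hm. reflexivity.
    + apply stab_refl_iff. intros r t.
      rewrite !pm_polar, Rmult_minus_distr_l, ang_mul by exact Hm.
      rewrite <- cos_neg, Ropp_minus_distr, cos_sub_period. reflexivity.
Qed.

Definition pmq (m : nat) (x y : R) : R := pm m x y + (x ^ 2 + y ^ 2) * qm m x y.

Lemma pmq_polar m r t :
  pmq m (r * cos t) (r * sin t) = r ^ m * cos (INR m * t) + r ^ 2 * (r ^ m * sin (INR m * t)).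
Proof.
  unfold pmq. rewrite pm_polar, qm_polar. pose proof (cos_sin_sq t) as H.
  replace ((r * cos t) ^ 2 + (r * sin t) ^ 2) with (r ^ 2 * (cos t * cos t + sin t * sin t)) by ring.
  rewrite H. ring.
Qed.

(* Comparing the radii 1 and 2 separates the two homogeneous parts. *)
Lemma two_radii m c s :
  (forall r, r = 1 \/ r = 2 -> r ^ m * c + r ^ 2 * (r ^ m * s) = r ^ m) -> c = 1 /\ s = 0.
Proof.
  intros H. pose proof (H 1 (or_introl eq_refl)) as H1. pose proof (H 2 (or_intror eq_refl)) as H2.
  rewrite pow1 in H1. assert (P : 0 < 2 ^ m) by (apply pow_lt; lra).
  assert (H2' : 2 ^ m * (c + 4 * s - 1) = 0) by (simpl pow in H2; lra).
  apply Rmult_integral in H2' as [X|X]; [lra|]. simpl pow in H1. lra.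
Qed.

Lemma stab_pmq m : (2 <= m)%nat -> forall A, in_stab (pmq m) A <-> inK m A.
Proof.
  intros Hm A. assert (Hm1 : (1 <= m)%nat) by lia. rewrite inK_iff. split.
  - intros HS. destruct (O2_class A (proj1 HS)) as [th [Hth [-> | ->]]].
    + rewrite stab_rot_iff in HS.
      assert (G : forall r, r = 1 \/ r = 2 ->
                r ^ m * cos (INR m * th) + r ^ 2 * (r ^ m * - sin (INR m * th)) = r ^ m).
      { intros r _. specialize (HS r 0). rewrite !pmq_polar in HS.
        rewrite Rminus_0_l, Ropp_mult_distr_r_reverse, cos_neg, sin_neg, Rmult_0_r,
          cos_0, sin_0 in HS. lra. }
      destruct (two_radii m _ _ G) as [C _].
      destruct (angle_of_cos_1 m th Hm1 Hth C) as [k ->]. eauto.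
    + exfalso. rewrite stab_refl_iff in HS.
      assert (G : forall r, r = 1 \/ r = 2 ->
                r ^ m * cos (INR m * th) + r ^ 2 * (r ^ m * sin (INR m * th)) = r ^ m).
      { intros r _. specialize (HS r 0). rewrite !pmq_polar in HS.
        rewrite Rminus_0_r, Rmult_0_r, cos_0, sin_0 in HS. lra. }
      destruct (two_radii m _ _ G) as [C S].
      (* as m th is a multiple of 2 pi, the reflection sends angle pi/2m to -pi/2m,
         where the sin (m t) component changes sign *)
      assert (0 < INR m) by (apply lt_0_INR; lia).
      specialize (HS 1 (PI / (2 * INR m))). rewrite !pmq_polar, pow1 in HS.
      replace (INR m * (th - PI / (2 * INR m))) with (INR m * th - PI / 2) in HS by (field; lra).
      replace (INR m * (PI / (2 * INR m))) with (PI / 2) in HS by (field; lra).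
      rewrite cos_minus, sin_minus, C, S, cos_PI2, sin_PI2 in HS. lra.
  - intros [k ->]. apply stab_rot_iff. intros r t.
    rewrite !pmq_polar, Rmult_minus_distr_l, ang_mul, cos_sub_period, sin_sub_period by exact Hm1.
    reflexivity.
Qed.

Lemma stab_x_xy A : in_stab (fun x y => x + x * y) A <-> inK 1 A.
Proof.
  rewrite inK_1. split.
  - intros [HO H]. destruct A as [a b c d]. unfold inO2, mmul, mtrans, mid in HO; cbn in HO.
    injection HO as H1 H2 H3 H4. unfold app, mtrans in H; cbn in H.
    pose proof (H 1 0) as E1. pose proof (H (-1) 0) as E2. pose proof (H 0 1) as E3.
    pose proof (H 0 (-1)) as E4. pose proof (H 1 1) as E5.
    assert (a = 1) by lra. subst a. assert (c = 0) by lra. subst c.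
    assert (b = 0) by lra. subst b. assert (d = 1) by lra. subst d. reflexivity.
  - intros ->. split.
    + unfold inO2, mmul, mtrans, mid; cbn. f_equal; ring.
    + intros x y. unfold app, mtrans, mid; cbn. ring.
Qed.
Fixpoint rsum (n : nat) (F : nat -> R) : R :=
  match n with O => 0 | S n => rsum n F + F n end.

Lemma rsum_plus n f g : rsum n (fun k => f k + g k) = rsum n f + rsum n g.
Proof. induction n; simpl; [ring|rewrite IHn; ring]. Qed.

Lemma rsum_scal n c f : rsum n (fun k => c * f k) = c * rsum n f.
Proof. induction n; simpl; [ring|rewrite IHn; ring]. Qed.

Lemma rsum_ext n f g : (forall k, f k = g k) -> rsum n f = rsum n g.
Proof. intros H; induction n; simpl; [auto|rewrite IHn, H; auto]. Qed.

Lemma rsum_const n c : rsum n (fun _ => c) = INR n * c.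
Proof. induction n; simpl rsum; [simpl; ring|rewrite IHn, S_INR; ring]. Qed.

Lemma telescope_cos n phi h :
  2 * sin h * rsum n (fun k => cos (phi + 2 * INR k * h)) = sin (phi + (2 * INR n - 1) * h) - sin (phi - h).
Proof.
  induction n as [|n IH]; simpl rsum.
  - simpl INR. replace (phi + (2 * 0 - 1) * h) with (phi - h) by ring. ring.
  - rewrite Rmult_plus_distr_l, IH, S_INR.
    replace (phi + (2 * (INR n + 1) - 1) * h) with ((phi + 2 * INR n * h) + h) by ring.
    replace (phi + (2 * INR n - 1) * h) with ((phi + 2 * INR n * h) - h) by ring.
    rewrite sin_plus, (sin_minus (phi + 2 * INR n * h) h). ring.
Qed.

Lemma telescope_sin n phi h :
  2 * sin h * rsum n (fun k => sin (phi + 2 * INR k * h)) = cos (phi - h) - cos (phi + (2 * INR n - 1) * h).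
Proof.
  induction n as [|n IH]; simpl rsum.
  - simpl INR. replace (phi + (2 * 0 - 1) * h) with (phi - h) by ring. ring.
  - rewrite Rmult_plus_distr_l, IH, S_INR.
    replace (phi + (2 * (INR n + 1) - 1) * h) with ((phi + 2 * INR n * h) + h) by ring.
    replace (phi + (2 * INR n - 1) * h) with ((phi + 2 * INR n * h) - h) by ring.
    rewrite cos_plus, (cos_minus (phi + 2 * INR n * h) h). ring.
Qed.

(* Averaging over the m rotations of angle 2 pi k / m kills every frequency s
   with 0 < s < 2m other than m: then h = pi s / m is not a multiple of pi. *)
Lemma average_frequency_zero m s t : (0 < s)%nat -> (s < 2 * m)%nat -> s <> m ->
  rsum m (fun k => cos (INR s * (t + ang m k))) = 0 /\
  rsum m (fun k => sin (INR s * (t + ang m k))) = 0.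
Proof.
  intros Hs1 Hs2 Hsm. pose proof PI_RGT_0.
  assert (Hm0 : 0 < INR m) by (apply lt_0_INR; lia).
  assert (Hs0 : 0 < INR s) by (apply lt_0_INR; lia).
  set (h := PI * INR s / INR m).
  assert (Hh : sin h <> 0).
  { destruct (Nat.lt_ge_cases s m) as [L|L].
    - apply lt_INR in L. assert (0 < sin h); [|lra]. apply sin_gt_0; unfold h.
      + apply Rdiv_lt_0_compat; nra.
      + apply (Rmult_lt_reg_r (INR m)); auto. field_simplify; [|lra]. nra.
    - assert (L' : (m < s)%nat) by lia. apply lt_INR in L'.
      apply lt_INR in Hs2. rewrite mult_INR in Hs2. simpl (INR 2) in Hs2.
      assert (sin h < 0); [|lra]. apply sin_lt_0; unfold h;
        apply (Rmult_lt_reg_r (INR m)); auto; field_simplify; nra. }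
  assert (Ek : forall k, INR s * (t + ang m k) = INR s * t + 2 * INR k * h).
  { intros k. unfold ang, h. field. lra. }
  assert (En : INR s * t + (2 * INR m - 1) * h = (INR s * t - h) + 2 * INR s * PI).
  { unfold h. field. lra. }
  split.
  - pose proof (telescope_cos m (INR s * t) h) as T.
    rewrite (rsum_ext _ _ (fun k => cos (INR s * t + 2 * INR k * h))) by (intros; rewrite Ek; auto).
    rewrite En, sin_period, Rminus_diag in T.
    apply Rmult_integral in T as [T|T]; [lra|auto].
  - pose proof (telescope_sin m (INR s * t) h) as T.
    rewrite (rsum_ext _ _ (fun k => sin (INR s * t + 2 * INR k * h))) by (intros; rewrite Ek; auto).
    rewrite En, cos_period, Rminus_diag in T.
    apply Rmult_integral in T as [T|T]; [lra|auto].
Qed.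

(* [trig_poly d g]: g is a trigonometric polynomial all of whose frequencies s
   satisfy s <= d and s = d mod 2.  This is the shape of cos^i t sin^j t with
   i + j = d, i.e. of a homogeneous polynomial of degree d on the unit circle. *)
Inductive trig_poly (d : nat) : (R -> R) -> Prop :=
| tp_cos s q c : d = (s + 2 * q)%nat -> trig_poly d (fun t => c * cos (INR s * t))
| tp_sin s q c : d = (s + 2 * q)%nat -> trig_poly d (fun t => c * sin (INR s * t))
| tp_add f g : trig_poly d f -> trig_poly d g -> trig_poly d (fun t => f t + g t)
| tp_ext f g : trig_poly d f -> (forall t, f t = g t) -> trig_poly d g.

Lemma tp_cos_sum d s u q c : d = (s + u + 2 * q)%nat ->
  trig_poly d (fun t => c * cos (INR s * t + INR u * t)).
Proof.
  intros Hd. eapply tp_ext; [apply (tp_cos d (s + u) q c Hd)|].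
  intros t. rewrite plus_INR. f_equal. f_equal. ring.
Qed.

Lemma tp_sin_sum d s u q c : d = (s + u + 2 * q)%nat ->
  trig_poly d (fun t => c * sin (INR s * t + INR u * t)).
Proof.
  intros Hd. eapply tp_ext; [apply (tp_sin d (s + u) q c Hd)|].
  intros t. rewrite plus_INR. f_equal. f_equal. ring.
Qed.

Lemma tp_cos_diff d s u q c : d = (s + u + 2 * q)%nat ->
  trig_poly d (fun t => c * cos (INR s * t - INR u * t)).
Proof.
  intros Hd. destruct (Nat.le_gt_cases u s) as [L|L].
  - eapply tp_ext; [apply (tp_cos d (s - u) (u + q) c); lia|].
    intros t. rewrite minus_INR by exact L. f_equal. f_equal. ring.
  - eapply tp_ext; [apply (tp_cos d (u - s) (s + q) c); lia|].
    intros t. rewrite minus_INR by lia. rewrite <- cos_neg. f_equal. f_equal. ring.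
Qed.

Lemma tp_sin_diff d s u q c : d = (s + u + 2 * q)%nat ->
  trig_poly d (fun t => c * sin (INR s * t - INR u * t)).
Proof.
  intros Hd. destruct (Nat.le_gt_cases u s) as [L|L].
  - eapply tp_ext; [apply (tp_sin d (s - u) (u + q) c); lia|].
    intros t. rewrite minus_INR by exact L. f_equal. f_equal. ring.
  - eapply tp_ext; [apply (tp_sin d (u - s) (s + q) (- c)); lia|].
    intros t. rewrite minus_INR by lia.
    replace (INR s * t - INR u * t) with (- ((INR u - INR s) * t)) by ring.
    rewrite sin_neg. ring.
Qed.

(* Product-to-sum formulas: the product of two modes is a trigonometric
   polynomial whose degree is the sum of the degrees. *)
Lemma tp_mode_mul d e s u q q' c c' (F G : R -> R) :
  d = (s + 2 * q)%nat -> e = (u + 2 * q')%nat -> (F = cos \/ F = sin) -> (G = cos \/ G = sin) ->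
  trig_poly (d + e) (fun t => c * F (INR s * t) * (c' * G (INR u * t))).
Proof.
  intros Hd He HF HG.
  assert (Hde : (d + e = s + u + 2 * (q + q'))%nat) by lia.
  set (k := c * c' / 2).
  destruct HF as [-> | ->]; destruct HG as [-> | ->]; eapply tp_ext.
  - apply tp_add; [apply (tp_cos_sum _ s u _ k Hde)|apply (tp_cos_diff _ s u _ k Hde)].
  - intros t; cbv beta. rewrite cos_plus, cos_minus. unfold k. field.
  - apply tp_add; [apply (tp_sin_sum _ s u _ k Hde)|apply (tp_sin_diff _ s u _ (- k) Hde)].
  - intros t; cbv beta. rewrite sin_plus, sin_minus. unfold k. field.
  - apply tp_add; [apply (tp_sin_sum _ s u _ k Hde)|apply (tp_sin_diff _ s u _ k Hde)].
  - intros t; cbv beta. rewrite sin_plus, sin_minus. unfold k. field.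
  - apply tp_add; [apply (tp_cos_sum _ s u _ (- k) Hde)|apply (tp_cos_diff _ s u _ k Hde)].
  - intros t; cbv beta. rewrite cos_plus, cos_minus. unfold k. field.
Qed.

Lemma tp_mul d e f g : trig_poly d f -> trig_poly e g -> trig_poly (d + e) (fun t => f t * g t).
Proof.
  intros Hf Hg.
  induction Hf as [s q c Hd|s q c Hd|f1 f2 _ IH1 _ IH2|f1 f2 _ IH E].
  3: { eapply tp_ext; [apply tp_add; [apply IH1|apply IH2]|]. intros; cbv beta; ring. }
  3: { eapply tp_ext; [apply IH|]. intros; cbv beta; rewrite E; auto. }
  all: induction Hg as [u q' c' He|u q' c' He|g1 g2 _ IH1 _ IH2|g1 g2 _ IH E];
    [ apply (tp_mode_mul d e s u q q'); auto
    | apply (tp_mode_mul d e s u q q'); auto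
    | eapply tp_ext; [apply tp_add; [apply IH1|apply IH2]|]; intros; cbv beta; ring
    | eapply tp_ext; [apply IH|]; intros; cbv beta; rewrite E; auto ].
Qed.

Lemma tp_pow f i : trig_poly 1 f -> trig_poly i (fun t => f t ^ i).
Proof.
  intros Hf. induction i as [|i IH].
  - eapply tp_ext; [apply (tp_cos 0 0 0 1); auto|]. intros t. simpl. rewrite Rmult_0_l, cos_0. ring.
  - eapply tp_ext; [apply (tp_mul 1 i _ _ Hf IH)|]. intros t. reflexivity.
Qed.

Lemma tp_monomial i j : trig_poly (i + j) (fun t => cos t ^ i * sin t ^ j).
Proof.
  assert (Hcos : trig_poly 1 cos).
  { eapply tp_ext; [apply (tp_cos 1 1 0 1); auto|]. intros t. simpl. rewrite !Rmult_1_l. auto. }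
  assert (Hsin : trig_poly 1 sin).
  { eapply tp_ext; [apply (tp_sin 1 1 0 1); auto|]. intros t. simpl. rewrite !Rmult_1_l. auto. }
  apply tp_mul; apply tp_pow; assumption.
Qed.

Definition average_shape (m d : nat) (g : R -> R) : Prop :=
  exists c a b,
    (forall t, rsum m (fun k => g (t + ang m k)) = c + a * cos (INR m * t) + b * sin (INR m * t))
    /\ (d <> m -> a = 0 /\ b = 0).

Lemma average_shape_mode m d s q c F : (1 <= m)%nat -> (F = cos \/ F = sin) ->
  d = (s + 2 * q)%nat -> (d < 2 * m)%nat -> (d <= m + 1)%nat ->
  average_shape m d (fun t => c * F (INR s * t)).
Proof.
  intros Hm HF Hd Hd1 Hd2.
  destruct (Nat.eq_dec s 0) as [->|S0]; [|destruct (Nat.eq_dec s m) as [->|Sm]].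
  - exists (INR m * (c * F 0)), 0, 0. split; [|auto]. intros t.
    rewrite (rsum_ext _ _ (fun _ => c * F 0)), rsum_const; [ring|].
    intros k. simpl INR. rewrite Rmult_0_l. reflexivity.
  - assert (Hper : forall t k, F (INR m * (t + ang m k)) = F (INR m * t)).
    { intros t k. rewrite Rmult_plus_distr_l, ang_mul by exact Hm.
      destruct HF as [-> | ->]; [apply cos_period|apply sin_period]. }
    destruct HF as [-> | ->];
      [exists 0, (INR m * c), 0 | exists 0, 0, (INR m * c)]; (split; [|lia]); intros t;
      rewrite (rsum_ext _ _ (fun _ => c * _ (INR m * t))), rsum_const by (intros k; rewrite Hper; auto);
      ring.
  - exists 0, 0, 0. split; [|auto]. intros t. rewrite rsum_scal.
    destruct (average_frequency_zero m s t) as [Tc Ts]; try lia.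
    destruct HF as [-> | ->]; [rewrite Tc|rewrite Ts]; ring.
Qed.

Lemma average_shape_tp m d g : (1 <= m)%nat -> (d < 2 * m)%nat -> (d <= m + 1)%nat ->
  trig_poly d g -> average_shape m d g.
Proof.
  intros Hm Hd1 Hd2 HT.
  induction HT as [s q c Hd|s q c Hd|f g _ IH1 _ IH2|f g _ IH E].
  - apply (average_shape_mode m d s q c cos); auto.
  - apply (average_shape_mode m d s q c sin); auto.
  - destruct IH1 as [c1 [a1 [b1 [H1 K1]]]]; destruct IH2 as [c2 [a2 [b2 [H2 K2]]]].
    exists (c1 + c2), (a1 + a2), (b1 + b2). split.
    + intros t. rewrite rsum_plus, H1, H2. ring.
    + intros N. destruct (K1 N), (K2 N). split; lra.
  - destruct IH as [c1 [a1 [b1 [H1 K1]]]]. exists c1, a1, b1. split; auto.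
    intros t. rewrite <- H1. apply rsum_ext. intros; rewrite E; auto.
Qed.

Definition polar_average_shape (m n : nat) (F : R -> R -> R) : Prop :=
  exists (C : R -> R) (a b : R),
    (forall r t, rsum m (fun k => F r (t + ang m k)) = C r + r ^ m * (a * cos (INR m * t) + b * sin (INR m * t)))
    /\ ((n <= m)%nat -> a = 0 /\ b = 0).

Lemma polar_average_shape_add m n F G :
  polar_average_shape m n F -> polar_average_shape m n G ->
  polar_average_shape m n (fun r t => F r t + G r t).
Proof.
  intros [C1 [a1 [b1 [H1 K1]]]] [C2 [a2 [b2 [H2 K2]]]].
  exists (fun r => C1 r + C2 r), (a1 + a2), (b1 + b2). split.
  - intros r t. rewrite rsum_plus, H1, H2. ring.
  - intros N. destruct (K1 N), (K2 N). split; lra.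
Qed.

Lemma polar_average_shape_sum m n (F : nat -> R -> R -> R) N :
  (forall i, polar_average_shape m n (F i)) ->
  polar_average_shape m n (fun r t => sum_f_R0 (fun i => F i r t) N).
Proof.
  intros H. induction N as [|N IH]; simpl.
  - destruct (H 0%nat) as [C [a [b [H1 K]]]]. exists C, a, b. split; auto.
  - apply (polar_average_shape_add m n _ _ IH (H (S N))).
Qed.

(* A monomial c x^i y^j of degree i + j < n is r^(i+j) cos^i t sin^j t; the
   bounds on n make its frequencies (all <= i + j = n - 1) fall below 2m,
   and frequency m appear only in degree exactly m. *)
Lemma polar_average_shape_monomial m n P i j : (1 <= m)%nat -> deg_lt P n ->
  (n <= m + 2)%nat -> (n <= 2 * m)%nat ->
  polar_average_shape m n (fun r t => coef P i j * (r * cos t) ^ i * (r * sin t) ^ j).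
Proof.
  intros Hm Hdeg Hn1 Hn2.
  destruct (Nat.le_gt_cases n (i + j)) as [L|L].
  - rewrite (Hdeg i j L). exists (fun _ => 0), 0, 0. split; [|auto].
    intros r t. rewrite (rsum_ext _ _ (fun _ => 0)), rsum_const; [ring|]. intros; ring.
  - destruct (average_shape_tp m (i + j) _ Hm ltac:(lia) ltac:(lia) (tp_monomial i j))
      as [c [a [b [H K]]]].
    set (w r := coef P i j * r ^ (i + j)).
    assert (Ex : forall r t k, coef P i j * (r * cos (t + ang m k)) ^ i * (r * sin (t + ang m k)) ^ j
                          = w r * (cos (t + ang m k) ^ i * sin (t + ang m k) ^ j)).
    { intros. unfold w. rewrite !Rpow_mult_distr, pow_add. ring. }
    destruct (Nat.eq_dec (i + j) m) as [E|E].
    + exists (fun r => w r * c), (coef P i j * a), (coef P i j * b). split; [|lia].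
      intros r t. rewrite (rsum_ext _ _ _ (Ex r t)), rsum_scal, H. unfold w. rewrite E. ring.
    + destruct (K E) as [-> ->]. exists (fun r => w r * c), 0, 0. split; [|auto].
      intros r t. rewrite (rsum_ext _ _ _ (Ex r t)), rsum_scal, H. ring.
Qed.

Lemma polar_average_shape_peval m n P : (1 <= m)%nat -> deg_lt P n ->
  (n <= m + 2)%nat -> (n <= 2 * m)%nat ->
  polar_average_shape m n (fun r t => peval P (r * cos t) (r * sin t)).
Proof.
  intros. unfold peval.
  apply (polar_average_shape_sum m n
           (fun i r t => sum_f_R0 (fun j => coef P i j * (r * cos t) ^ i * (r * sin t) ^ j) (pbound P))).
  intros i. apply (polar_average_shape_sum m n (fun j r t => coef P i j * (r * cos t) ^ i * (r * sin t) ^ j)).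
  intros j. apply polar_average_shape_monomial; auto.
Qed.

Lemma invariant_average m f : (1 <= m)%nat -> in_stab f (rot (ang m 1)) ->
  forall r t, rsum m (fun k => f (r * cos (t + ang m k)) (r * sin (t + ang m k)))
              = INR m * f (r * cos t) (r * sin t).
Proof.
  intros Hm HS r t. rewrite <- rsum_const. apply rsum_ext. intros k.
  rewrite stab_rot_iff in HS. induction k as [|k IH].
  - unfold ang. rewrite Rmult_0_l, Rplus_0_r. reflexivity.
  - rewrite <- IH, <- (HS r (t + ang m (S k))).
    replace (t + ang m (S k) - ang m 1) with (t + ang m k) by (unfold ang; rewrite (S_INR k); simpl (INR 1); ring).
    reflexivity.
Qed.

Lemma invariant_polar_form m n P : (1 <= m)%nat -> deg_lt P n ->
  (n <= m + 2)%nat -> (n <= 2 * m)%nat -> in_stab (peval P) (rot (ang m 1)) ->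
  exists (C : R -> R) a b,
    (forall r t, INR m * peval P (r * cos t) (r * sin t)
                 = C r + r ^ m * (a * cos (INR m * t) + b * sin (INR m * t)))
    /\ ((n <= m)%nat -> a = 0 /\ b = 0).
Proof.
  intros Hm Hd Hn1 Hn2 HS.
  destruct (polar_average_shape_peval m n P Hm Hd Hn1 Hn2) as [C [a [b [H K]]]].
  exists C, a, b. split; auto. intros r t. rewrite <- H. symmetry.
  exact (invariant_average m (peval P) Hm HS r t).
Qed.

(* Part (1), second half: a polynomial of degree < m invariant under sigma_m is
   radial, so it is also invariant under the rotation by pi/m, which is not in
   D_m since it moves p_m. *)
Lemma no_small_D m P : (1 <= m)%nat -> deg_lt P m -> ~ (forall A, in_stab (peval P) A <-> inD m A).
Proof.
  intros Hm Hd H. assert (Hm0 : 0 < INR m) by (apply lt_0_INR; lia).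
  assert (HS : in_stab (peval P) (rot (ang m 1))) by (apply H, inD_iff; eauto).
  destruct (invariant_polar_form m m P Hm Hd ltac:(lia) ltac:(lia) HS) as [C [a [b [E K]]]].
  destruct (K (le_n m)) as [-> ->].
  assert (HR : in_stab (peval P) (rot (PI / INR m))).
  { apply stab_rot_iff. intros r t. apply (Rmult_eq_reg_l (INR m)); [|lra]. rewrite !E. ring. }
  apply H, (stab_pm m Hm) in HR. rewrite stab_rot_iff in HR. specialize (HR 1 0).
  rewrite !pm_polar, Rminus_0_l, Rmult_0_r, cos_0 in HR.
  replace (INR m * - (PI / INR m)) with (- PI) in HR by (field; lra).
  rewrite cos_neg, cos_PI, pow1 in HR. lra.
Qed.

(* Every a cos u + b sin u is invariant under u -> phi - u for a suitable phi:
   (c, s) = (cos phi, sin phi) is the reflection of (1, 0) across (a, b). *)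
Lemma reflection_coefficients a b :
  exists c s, c * c + s * s = 1 /\ a * c + b * s = a /\ a * s - b * c = b.
Proof.
  destruct (Req_dec (a * a + b * b) 0) as [Z|Z].
  - exists 1, 0. assert (a = 0) by nra. assert (b = 0) by nra. subst. repeat split; ring.
  - exists ((a * a - b * b) / (a * a + b * b)), (2 * a * b / (a * a + b * b)).
    split; [|split]; field_simplify_eq; auto; ring.
Qed.

(* Parts (2) and (3), second halves: a polynomial of degree < min(m + 2, 2m + 1)
   invariant under sigma_m is invariant under some reflection, which is not in K_m. *)
Lemma no_small_K m n P : (1 <= m)%nat -> (n <= m + 2)%nat -> (n <= 2 * m)%nat ->
  deg_lt P n -> ~ (forall A, in_stab (peval P) A <-> inK m A).
Proof.
  intros Hm Hn1 Hn2 Hd H. assert (Hm0 : 0 < INR m) by (apply lt_0_INR; lia).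
  assert (HS : in_stab (peval P) (rot (ang m 1))) by (apply H, inK_iff; eauto).
  destruct (invariant_polar_form m n P Hm Hd Hn1 Hn2 HS) as [C [a [b [E _]]]].
  destruct (reflection_coefficients a b) as [c [s [Hcs [Ha Hb]]]].
  destruct (angle_exists c s Hcs) as [phi [_ [Hc Hs]]].
  assert (HR : in_stab (peval P) (refl (phi / INR m))).
  { apply stab_refl_iff. intros r t. apply (Rmult_eq_reg_l (INR m)); [|lra]. rewrite !E.
    replace (INR m * (phi / INR m - t)) with (phi - INR m * t) by (field; lra).
    rewrite cos_minus, sin_minus, Hc, Hs.
    set (X := cos (INR m * t)). set (Y := sin (INR m * t)).
    replace (a * (c * X + s * Y) + b * (s * X - c * Y))
      with ((a * c + b * s) * X + (a * s - b * c) * Y) by ring.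
    rewrite Ha, Hb. reflexivity. }
  apply H, inK_iff in HR. destruct HR as [k X]. exact (rot_neq_refl _ _ (eq_sym X)).
Qed.

Theorem mainTheorem12 :
  (forall m : nat, (1 <= m)%nat ->
     (forall A, in_stab (pm m) A <-> inD m A) /\
     (forall P : poly2, deg_lt P m -> ~ (forall A, in_stab (peval P) A <-> inD m A)))
  /\
  (forall m : nat, (2 <= m)%nat ->
     (forall A, in_stab (fun x y => pm m x y + (x ^ 2 + y ^ 2) * qm m x y) A <-> inK m A) /\
     (forall P : poly2, deg_lt P (m + 2) -> ~ (forall A, in_stab (peval P) A <-> inK m A)))
  /\
  ((forall A, in_stab (fun x y => x + x * y) A <-> inK 1 A) /\
   (forall P : poly2, deg_lt P 2 -> ~ (forall A, in_stab (peval P) A <-> inK 1 A))).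
Proof.
  split; [|split].
  - intros m Hm. split; [exact (stab_pm m Hm)|]. intros P. exact (no_small_D m P Hm).
  - intros m Hm. split; [exact (stab_pmq m Hm)|]. intros P. apply no_small_K; lia.
  - split; [exact stab_x_xy|]. intros P. apply no_small_K; lia.
Qed.
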